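(* Let $\mathbf{W}=\langle W;\to,\neg,{}^{+},{}^{-},1\rangle$ be a quasi-Wajsberg* algebra and $\mu$ the congruence on $\mathbf{W}$ defined by $\langle x,y\rangle\in\mu$ iff $x\le y$ and $y\le x$. Then the quotient $\mathbf{W}/\mu=\langle W/\mu;\to,\neg,1/\mu\rangle$ is a Wajsberg*-algebra.
   Context: A quasi-Wajsberg* algebra is an algebra $\langle W;\to,\neg,{}^{+},{}^{-},1\rangle$ of type $\langle2,1,1,1,0\rangle$ such that for all $x,y,z\in W$: (QW*1) $x\to y=\neg y\to\neg x$; (QW*2) $(x\to 1)\to((y\to 1)\to z)=(y\to 1)\to((x\to 1)\to z)$; (QW*3) $(1\to x)\to 1=1$; (QW*4) $(z\to z)\to(x\to y)=x\to y$; (QW*5) $(1\to 1)\to x^{+}=((1\to 1)\to x)^{+}=(x\to 1)\to 1$ and $(1\to 1)\to x^{-}=((1\to 1)\to x)^{-}=(x\to\neg 1)\to\neg 1$; (QW*6) $x\to y=(y^{+}\to x^{-})\to(x^{+}\to y^{-})$; (QW*7) $\neg(x\to y)=y\to x$; (QW*8) $\neg\neg x=x$; (QW*9) $(x\to(\neg x\to y))^{+}=x^{+}\to(\neg x^{+}\to y^{+})$; (QW*10) $x\vee y=y\vee x$; (QW*11) $x\vee(y\vee z)=(x\vee y)\vee z$; (QW*12) $x\to(y\vee z)=(x\to y)\vee(x\to z)$; where $x\vee y:=((x^{+}\to y^{+})^{+}\to(\neg x)^{-})\to((y^{-}\to x^{-})^{-}\to x^{-})$. Conventions: ${}^+,{}^-$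 bind tighter than $\neg$, which binds tighter than $\to$. Put $0:=1\to 1$ and $x\le y$ iff $x\vee y=0\to y$. The quotient operations are $(x/\mu)\to(y/\mu)=(x\to y)/\mu$ and $\neg(x/\mu)=(\neg x)/\mu$. A Wajsberg*-algebra is an algebra $\langle M;\to,\neg,1\rangle$ of type $\langle2,1,0\rangle$ such that for all $x,y,z\in M$: (M1) $x\to y=\neg y\to\neg x$; (M2) $(x\to 1)\to((y\to 1)\to z)=(y\to 1)\to((x\to 1)\to z)$; (M3) $(1\to x)\to 1=1$; (M4) $(y\to y)\to x=x$; (M5) $x\to y=(y^{+}\to x^{-})\to(x^{+}\to y^{-})$; (M6) $\neg(x\to y)=y\to x$; (M7) $\neg\neg x=x$; (M8) $(x\to(\neg x\to y))^{+}=x^{+}\to(\neg x^{+}\to y^{+})$; (M9) $x\vee y=y\vee x$; (M10) $x\vee(y\vee z)=(x\vee y)\vee z$; (M11) $x\to(y\vee z)=(x\to y)\vee(x\to z)$; where $x^{+}:=(x\to 1)\to 1$, $x^{-}:=(x\to\neg 1)\to\neg 1$ and $x\vee y:=((x^{+}\to y^{+})^{+}\to(\neg x)^{-})\to((y^{-}\to x^{-})^{-}\to x^{-})$. *)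

From Stdlib Require Import ClassicalEpsilon.
Set Implicit Arguments.

Section QW.
Variable W : Type.
Variables (imp : W -> W -> W) (neg : W -> W) (pl mi : W -> W) (one : W).

Definition qw_join (x y : W) : W :=
  imp (imp (pl (imp (pl x) (pl y))) (mi (neg x)))
      (imp (mi (imp (mi y) (mi x))) (mi x)).

Definition qw_zero : W := imp one one.

Definition qw_le (x y : W) : Prop := qw_join x y = imp qw_zero y.

Definition qw_mu (x y : W) : Prop := qw_le x y /\ qw_le y x.

Record quasi_wajsberg_star : Prop := {
  QW1 : forall x y, imp x y = imp (neg y) (neg x);
  QW2 : forall x y z, imp (imp x one) (imp (imp y one) z)
                     = imp (imp y one) (imp (imp x one) z);
  QW3 : forall x, imp (imp one x) one = one;
  QW4 : forall x y z, imp (imp z z) (imp x y) = imp x y;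
  QW5a : forall x, imp (imp one one) (pl x) = pl (imp (imp one one) x);
  QW5b : forall x, pl (imp (imp one one) x) = imp (imp x one) one;
  QW5c : forall x, imp (imp one one) (mi x) = mi (imp (imp one one) x);
  QW5d : forall x, mi (imp (imp one one) x) = imp (imp x (neg one)) (neg one);
  QW6 : forall x y, imp x y = imp (imp (pl y) (mi x)) (imp (pl x) (mi y));
  QW7 : forall x y, neg (imp x y) = imp y x;
  QW8 : forall x, neg (neg x) = x;
  QW9 : forall x y, pl (imp x (imp (neg x) y))
                   = imp (pl x) (imp (neg (pl x)) (pl y));
  QW10 : forall x y, qw_join x y = qw_join y x;
  QW11 : forall x y z, qw_join x (qw_join y z) = qw_join (qw_join x y) z;
  QW12 : forall x y z, imp x (qw_join y z) = qw_join (imp x y) (imp x z)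
}.

Definition mu_congruence : Prop :=
  (forall x, qw_mu x x) /\
  (forall x y, qw_mu x y -> qw_mu y x) /\
  (forall x y z, qw_mu x y -> qw_mu y z -> qw_mu x z) /\
  (forall x x' y y', qw_mu x x' -> qw_mu y y' -> qw_mu (imp x y) (imp x' y')) /\
  (forall x x', qw_mu x x' -> qw_mu (neg x) (neg x')).

Definition qclass (x : W) : W -> Prop := fun y => qw_mu x y.
Definition Wmu : Type := { A : W -> Prop | exists x, A = qclass x }.
Definition cls (x : W) : Wmu := exist _ (qclass x) (ex_intro _ x eq_refl).
Definition rep (A : Wmu) : W :=
  proj1_sig (constructive_indefinite_description _ (proj2_sig A)).
Definition qimp (A B : Wmu) : Wmu := cls (imp (rep A) (rep B)).
Definition qneg (A : Wmu) : Wmu := cls (neg (rep A)).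
Definition qone : Wmu := cls one.
End QW.

Section WS.
Variable M : Type.
Variables (imp : M -> M -> M) (neg : M -> M) (one : M).
Definition ws_plus (x : M) : M := imp (imp x one) one.
Definition ws_minus (x : M) : M := imp (imp x (neg one)) (neg one).
Definition ws_join (x y : M) : M :=
  imp (imp (ws_plus (imp (ws_plus x) (ws_plus y))) (ws_minus (neg x)))
      (imp (ws_minus (imp (ws_minus y) (ws_minus x))) (ws_minus x)).

Record wajsberg_star : Prop := {
  M1 : forall x y, imp x y = imp (neg y) (neg x);
  M2 : forall x y z, imp (imp x one) (imp (imp y one) z)
                    = imp (imp y one) (imp (imp x one) z);
  M3 : forall x, imp (imp one x) one = one;
  M4 : forall x y, imp (imp y y) x = x;
  M5 : forall x y, imp x y
        = imp (imp (ws_plus y) (ws_minus x)) (imp (ws_plus x) (ws_minus y));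
  M6 : forall x y, neg (imp x y) = imp y x;
  M7 : forall x, neg (neg x) = x;
  M8 : forall x y, ws_plus (imp x (imp (neg x) y))
        = imp (ws_plus x) (imp (neg (ws_plus x)) (ws_plus y));
  M9 : forall x y, ws_join x y = ws_join y x;
  M10 : forall x y z, ws_join x (ws_join y z) = ws_join (ws_join x y) z;
  M11 : forall x y z, imp x (ws_join y z) = ws_join (imp x y) (imp x z)
}.
End WS.

(** The term [0 := 1 -> 1] acts as a left unit up to normalisation: [0 -> (x -> y) = x -> y]
    by axiom QW*4, and from this one derives [x v x = 0 -> x], hence [0 -> x] can be erased on
    either side of an implication.  Consequently [x <= y /\ y <= x] holds exactly when
    [0 -> x = 0 -> y], i.e. [mu] is the kernel of [x |-> 0 -> x], which respects [->] and
    [~].  Every Wajsberg* axiom of [W/mu] other than (M4) is the image of the corresponding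
    QW* identity, and (M4) holds because [(y -> y) -> x = 0 -> x] is [mu]-equivalent
    to [x]. *)

From Pilot Require Import Defs.
From Stdlib Require Import ClassicalEpsilon FunctionalExtensionality PropExtensionality ProofIrrelevance.

Section QuasiWajsbergStar.

Variables (W : Type) (imp : W -> W -> W) (neg : W -> W) (pl mi : W -> W) (one : W).
Hypothesis qw : quasi_wajsberg_star imp neg pl mi one.

Local Notation zero := (imp one one).
Local Notation join := (qw_join imp neg pl mi).
Local Notation mu := (qw_mu imp neg pl mi one).

Lemma zero_imp_imp x y : imp zero (imp x y) = imp x y.
Proof. apply (QW4 qw). Qed.

Lemma neg_zero : neg zero = zero.
Proof. apply (QW7 qw). Qed.

Lemma imp_self u : imp u u = zero.
Proof.
  rewrite <- (zero_imp_imp u u), (QW1 qw zero (imp u u)), (QW7 qw), neg_zero.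
  apply (QW4 qw).
Qed.

Lemma neg_one : neg one = imp one zero.
Proof. rewrite <- (QW3 qw one) at 1; apply (QW7 qw). Qed.

Lemma pl_zero : pl zero = zero.
Proof. rewrite <- (imp_self zero) at 1; rewrite (QW5b qw), (QW3 qw one); reflexivity. Qed.

Lemma mi_zero : mi zero = zero.
Proof.
  rewrite <- (imp_self zero) at 1.
  rewrite (QW5d qw), neg_one, zero_imp_imp; apply imp_self.
Qed.

(* Both sides reduce to [1 -> (x -> 1)]. *)
Lemma zero_imp_mi_neg x : imp zero (mi (neg x)) = imp (pl x) zero.
Proof.
  rewrite (QW5c qw), (QW5d qw), <- (QW1 qw one x).
  rewrite <- (QW7 qw zero (pl x)), (QW5a qw), (QW5b qw).
  rewrite (QW1 qw (imp one x) (neg one)), (QW8 qw), !(QW7 qw).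
  reflexivity.
Qed.

Lemma join_diag x : join x x = imp zero x.
Proof.
  unfold qw_join; rewrite (imp_self (pl x)), (imp_self (mi x)), pl_zero, mi_zero.
  rewrite (QW6 qw zero x), mi_zero, pl_zero, zero_imp_mi_neg.
  reflexivity.
Qed.

Lemma imp_zero_imp a y : imp a (imp zero y) = imp a y.
Proof. rewrite <- join_diag, (QW12 qw), join_diag; apply zero_imp_imp. Qed.

Lemma imp_zero u : imp u zero = imp zero (neg u).
Proof. rewrite (QW1 qw u zero), neg_zero; reflexivity. Qed.

Lemma zero_imp_imp_l u v : imp (imp zero u) v = imp u v.
Proof.
  rewrite (QW1 qw (imp zero u) v), (QW7 qw), imp_zero, imp_zero_imp.
  symmetry; apply (QW1 qw).
Qed.

Lemma zero_imp_neg x : imp zero (neg x) = imp (imp zero x) zero.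
Proof. rewrite <- imp_zero, zero_imp_imp_l; reflexivity. Qed.

Lemma join_zero_imp x y : join (imp zero x) (imp zero y) = join x y.
Proof. rewrite <- (QW12 qw); apply zero_imp_imp. Qed.

Lemma qw_muE x y : mu x y <-> imp zero x = imp zero y.
Proof.
  unfold qw_mu, qw_le, qw_zero; split.
  - intros [le_xy le_yx]; rewrite (QW10 qw) in le_yx; congruence.
  - intros e; split.
    + rewrite <- join_zero_imp, e, join_zero_imp, join_diag; reflexivity.
    + rewrite <- join_zero_imp, <- e, join_zero_imp, join_diag; reflexivity.
Qed.

Lemma mu_is_congruence : mu_congruence imp neg pl mi one.
Proof.
  unfold mu_congruence; split; [| split; [| split; [| split]]]; intros;
    repeat rewrite qw_muE in *.
  - reflexivity.
  - congruence.
  - congruence.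
  - rewrite !zero_imp_imp, <- (zero_imp_imp_l x), <- imp_zero_imp, H, H0.
    rewrite imp_zero_imp, zero_imp_imp_l; reflexivity.
  - rewrite !zero_imp_neg; congruence.
Qed.

Local Notation Wmu := (Wmu imp neg pl mi one).
Local Notation cl := (@cls W imp neg pl mi one).
Local Notation rep := (@rep W imp neg pl mi one).
Local Notation qimp := (@qimp W imp neg pl mi one).
Local Notation qneg := (@qneg W imp neg pl mi one).
Local Notation qone := (@qone W imp neg pl mi one).

Lemma cls_eq x y : imp zero x = imp zero y -> cl x = cl y.
Proof.
  intros e; unfold cls; apply eq_sig_hprop; [intros; apply proof_irrelevance |].
  apply functional_extensionality; intros w; apply propositional_extensionality.
  unfold qclass; split; intros h; apply qw_muE; apply qw_muE in h; congruence.
Qed.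

Lemma cls_surj (A : Wmu) : exists x, A = cl x.
Proof.
  destruct A as [P [x ->]]; exists x.
  apply eq_sig_hprop; [intros; apply proof_irrelevance | reflexivity].
Qed.

Lemma zero_imp_rep x : imp zero (rep (cl x)) = imp zero x.
Proof.
  unfold Defs.rep; destruct (constructive_indefinite_description _ _) as [x' e]; simpl in *.
  assert (refl_x' : qclass imp neg pl mi one x' x') by (apply qw_muE; reflexivity).
  rewrite <- e in refl_x'; symmetry; apply qw_muE; exact refl_x'.
Qed.

Lemma qimp_cls x y : qimp (cl x) (cl y) = cl (imp x y).
Proof.
  apply cls_eq; rewrite !zero_imp_imp.
  rewrite <- zero_imp_imp_l, <- imp_zero_imp, !zero_imp_rep.
  rewrite imp_zero_imp, zero_imp_imp_l; reflexivity.
Qed.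

Lemma qneg_cls x : qneg (cl x) = cl (neg x).
Proof. apply cls_eq; rewrite !zero_imp_neg, zero_imp_rep; reflexivity. Qed.

Lemma qone_cls : qone = cl one.
Proof. reflexivity. Qed.

Lemma ws_plus_cls x : ws_plus qimp qone (cl x) = cl (pl x).
Proof.
  unfold ws_plus; rewrite qone_cls, !qimp_cls; apply cls_eq.
  rewrite zero_imp_imp, (QW5a qw), (QW5b qw); reflexivity.
Qed.

Lemma ws_minus_cls x : ws_minus qimp qneg qone (cl x) = cl (mi x).
Proof.
  unfold ws_minus; rewrite qone_cls, qneg_cls, !qimp_cls; apply cls_eq.
  rewrite zero_imp_imp, (QW5c qw), (QW5d qw); reflexivity.
Qed.

Ltac push_cls :=
  repeat first [ rewrite ws_plus_cls | rewrite ws_minus_cls | rewrite qimp_cls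
               | rewrite qneg_cls | rewrite qone_cls ].

Lemma ws_join_cls x y : ws_join qimp qneg qone (cl x) (cl y) = cl (join x y).
Proof. unfold ws_join; push_cls; reflexivity. Qed.

Ltac by_classes :=
  intros;
  repeat match goal with
         | A : Wmu |- _ => let x := fresh "x" in destruct (cls_surj A) as [x ->]
         end;
  repeat rewrite ws_join_cls; push_cls; repeat rewrite ws_join_cls.

Lemma quotient_wajsberg_star : wajsberg_star qimp qneg qone.
Proof.
  constructor; by_classes.
  - f_equal; apply (QW1 qw).
  - f_equal; apply (QW2 qw).
  - f_equal; apply (QW3 qw).
  - apply cls_eq; rewrite zero_imp_imp, imp_self; reflexivity.
  - f_equal; apply (QW6 qw).
  - f_equal; apply (QW7 qw).
  - f_equal; apply (QW8 qw).
  - f_equal; apply (QW9 qw).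
  - f_equal; apply (QW10 qw).
  - f_equal; apply (QW11 qw).
  - f_equal; apply (QW12 qw).
Qed.

End QuasiWajsbergStar.

Theorem proposition4p3 (W : Type) (imp : W -> W -> W) (neg : W -> W)
  (pl mi : W -> W) (one : W) :
  quasi_wajsberg_star imp neg pl mi one ->
  mu_congruence imp neg pl mi one /\
  wajsberg_star (@qimp W imp neg pl mi one) (@qneg W imp neg pl mi one)
                (@qone W imp neg pl mi one).
Proof.
  intros qw; split.
  - apply mu_is_congruence; exact qw.
  - apply quotient_wajsberg_star; exact qw.
Qed.
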